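(* Let $(a,b)$ and $(c,d)$ be arcs of the completed $\infty$-gon, identified with indecomposable objects of $\mathcal{C}_2$. Then \[ \mathrm{Hom}_R((a,b),(c,d))\cong\begin{cases}\mathbb{C}^2&\text{if }-\infty<a\le c\text{ and }b\le d,\\ 0&\text{if }-\infty=a\le c\text{ and }d<b,\\ 0&\text{if }d<a,\\ \mathbb{C}&\text{otherwise,}\end{cases} \] where $\mathrm{Hom}_R$ denotes degree-preserving homomorphisms of graded $R$-modules.
   Context: Let $R=\mathbb{C}[x,y]/(x^2)$, graded with $\deg x=1$, $\deg y=-1$; $M(j)_n=M_{j+n}$. $\mathcal{C}_2$ is the category of finitely generated $\mathbb{Z}$-graded maximal Cohen–Macaulay $R$-modules with degree-preserving morphisms. An arc of the completed $\infty$-gon is a pair $(a,b)$ with $a\in\mathbb{Z}\cup\{-\infty\}$, $b\in\mathbb{Z}$, $a<b$ (with $-\infty$ smaller than every integer). Indecomposables correspond to arcs via $(x,y^k)(j)\leftrightarrow(-j-k,1-j)$ for $k\ge0$, $j\in\mathbb{Z}$ (with $(x,y^0)=R$), and $\mathbb{C}[y](j)=(R/(x))(j)\leftrightarrow(-\infty,-j)$; equivalently a finite arc $(a,b)$ is $(x,y^{b-a-1})(1-b)$ and an infinite arc $(-\infty,b)$ is $\mathbb{C}[y](-b)$. *)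

From HB Require Import structures.
From mathcomp Require Import all_boot all_order all_algebra.
From mathcomp Require Import complex.
From mathcomp Require Import Rstruct.
Set Implicit Arguments. Unset Strict Implicit. Unset Printing Implicit Defensive.
Import Order.TTheory GRing.Theory Num.Theory.
Local Open Scope ring_scope.

Definition CC : fieldType := (Rdefinitions.R)[i].

(* R = C[x,y]/(x^2): an element p(y) + x q(y) is represented by (p, q). *)
Definition Rel : Type := ({poly CC} * {poly CC})%type.

(* multiplication in R (using x^2 = 0) *)
Definition Rmul (r v : Rel) : Rel := (r.1 * v.1, r.1 * v.2 + r.2 * v.1).

Definition sc (c : CC) (v : Rel) : Rel := (c *: v.1, c *: v.2).

Definition pcomp (p : {poly CC}) (e : int) : bool :=
  match e with
  | Posz m => p == p`_m *: 'X^m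
  | Negz _ => p == 0
  end.

(* R_m : deg x = 1, deg y = -1, so y^e has degree -e and x y^e degree 1-e. *)
Definition Rhomog (m : int) (v : Rel) : bool := pcomp v.1 (- m) && pcomp v.2 (1 - m).

(* An arc is (a, b) with a : option int (None = -oo), b : int, a < b. *)
Definition arc_ok (a : option int) (b : int) : Prop :=
  match a with Some a' => (a' < b)%R | None => True end.

Definition le_ext (a c : option int) : bool :=
  match a, c with
  | None, _ => true
  | Some _, None => false
  | Some a', Some c' => (a' <= c')%R
  end.

(* The indecomposable attached to the arc:
   finite (a,b)  ~  (x, y^(b-a-1))(1-b), a graded submodule of R(1-b);
   (-oo,b)      ~  C[y](-b) = (R/(x))(-b), represented inside Rel as
                   the elements (p, 0), with R acting through R -> R/(x). *)
Definition mod_mem (a : option int) (b : int) (v : Rel) : bool :=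
  match a with
  | Some a' => ('X^(absz (b - a' - 1)%R) %| v.1)%R
  | None => v.2 == 0
  end.

Definition mod_act (a : option int) (r v : Rel) : Rel :=
  match a with
  | Some _ => Rmul r v
  | None => (r.1 * v.1, 0)
  end.

(* v is homogeneous of degree n in the module (M(j)_n = M_(j+n)) *)
Definition mod_homog (a : option int) (b : int) (n : int) (v : Rel) : bool :=
  match a with
  | Some _ => Rhomog ((1 - b) + n) v
  | None => pcomp v.1 (- ((- b) + n)) && (v.2 == 0)
  end.

(* f is a degree-preserving homomorphism of graded R-modules from the module
   of arc (a,b) to the module of arc (c,d) (f is only relevant on elements of
   the source module). *)
Definition is_hom (a : option int) (b : int) (c : option int) (d : int)
    (f : Rel -> Rel) : Prop :=
  [/\ (forall v, mod_mem a b v -> mod_mem c d (f v)),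
      (forall u v, mod_mem a b u -> mod_mem a b v -> f (u + v) = f u + f v),
      (forall r v, mod_mem a b v -> f (mod_act a r v) = mod_act c r (f v))
    & (forall n v, mod_mem a b v -> mod_homog a b n v -> mod_homog c d n (f v))].

(* Hom_R((a,b),(c,d)) is isomorphic to C^k as a C-vector space: there are
   homomorphisms f_0..f_(k-1) forming a basis (homomorphisms are identified
   when they agree on the source module). *)
Definition hom_iso_Ck (a : option int) (b : int) (c : option int) (d : int)
    (k : nat) : Prop :=
  exists fs : 'I_k -> Rel -> Rel,
    [/\ (forall i, is_hom a b c d (fs i)),
        (forall cs : 'I_k -> CC,
           (forall v, mod_mem a b v -> \sum_(i < k) sc (cs i) (fs i v) = 0) ->
           forall i, cs i = 0)
      & (forall g, is_hom a b c d g ->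
           exists cs : 'I_k -> CC,
             forall v, mod_mem a b v -> g v = \sum_(i < k) sc (cs i) (fs i v))].

From HB Require Import structures.
From mathcomp Require Import all_boot all_order all_algebra.
From mathcomp Require Import zify ring.
Set Implicit Arguments. Unset Strict Implicit. Unset Printing Implicit Defensive.
Import Order.TTheory GRing.Theory Num.Theory.
Local Open Scope ring_scope.

(* The module of a finite arc (a, b) is generated by y^k (degree a) and x (degree b),
   k = b - a - 1, subject to x . y^k = y^k . x and x . x = 0; that of an infinite arc
   (-oo, b) is generated by 1 (degree b), on which x acts as 0.  A graded homomorphism
   is therefore the same thing as a pair of homogeneous elements of the target, of
   these degrees, satisfying the same relations.  Homogeneous pieces of the target are
   spanned by monomials, so the relations can be solved by hand.  For finite source
   and target the solutions are m1 = (y^k q2, q1), m2 = (0, q2) with q1 in C y^(d-a),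
   q2 in C y^(d-b) and y^(d-c-1) dividing y^k q2; hence q2 survives only when
   a <= c and b <= d.  In all other cases a single monomial coefficient remains,
   present iff its exponent is nonnegative. *)

Lemma pcompP (p : {poly CC}) (e : int) :
  pcomp p e <-> (forall i : nat, Posz i <> e -> p`_i = 0).
Proof.
case: e => m; rewrite /pcomp; split.
- move/eqP=> -> i hi; rewrite coefZ coefXn.
  by case: eqVneq => [eim|_]; [case: hi; rewrite eim | rewrite mulr0].
- move=> hp; apply/eqP/polyP => i; rewrite coefZ coefXn.
  case: eqVneq => [->|ne]; first by rewrite mulr1.
  by rewrite mulr0 hp // => -[eim]; rewrite eim eqxx in ne.
- by move/eqP=> -> i _; rewrite coef0.
- by move=> hp; apply/eqP/polyP => i; rewrite coef0 hp.
Qed.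

Lemma pcomp0 e : pcomp 0 e.
Proof. by apply/pcompP => i _; rewrite coef0. Qed.

Lemma pcompD p q e : pcomp p e -> pcomp q e -> pcomp (p + q) e.
Proof.
move=> /pcompP hp /pcompP hq; apply/pcompP => i hi.
by rewrite coefD hp // hq // addr0.
Qed.

Lemma pcompM p q e1 e2 e :
  pcomp p e1 -> pcomp q e2 -> e1 + e2 = e -> pcomp (p * q) e.
Proof.
move=> /pcompP hp /pcompP hq <-; apply/pcompP => i hi.
rewrite coefM big1 // => j _.
have [hj|hj] := eqVneq (Posz j) e1; last by rewrite hp ?mul0r //; apply/eqP.
rewrite hq ?mulr0 // => h; apply: hi; rewrite -hj -h.
have := ltn_ord j; lia.
Qed.

Lemma pcompXn m e : Posz m = e -> pcomp 'X^m e.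
Proof. by move=> <-; rewrite /pcomp coefXn eqxx scale1r. Qed.

Lemma pcomp_eq_exp p e e' : pcomp p e -> e = e' -> pcomp p e'.
Proof. by move=> ? <-. Qed.

Lemma pcomp_divXn p e k : pcomp p e -> 'X^k %| p -> pcomp (p %/ 'X^k) (e - k%:Z).
Proof.
move=> /pcompP hp hdvd; apply/pcompP => i hi.
have := coefMXn k (p %/ 'X^k) (i + k).
rewrite ltnNge leq_addl /= addnK divpK // => <-; apply: hp => h.
apply: hi; rewrite -h; lia.
Qed.

Lemma pcomp_lt0 p e : pcomp p e -> e < 0 -> p = 0.
Proof.
move=> /pcompP hp he; apply/polyP => i; rewrite coef0 hp // => h.
by move: he; rewrite -h.
Qed.

Lemma pcomp_monomial p e : pcomp p e -> 0 <= e -> exists al, p = al *: 'X^(absz e).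
Proof. by case: e => [m /eqP hp _|//]; exists p`_m. Qed.

Lemma coef_dvdXn l (p : {poly CC}) m : 'X^l %| p -> (m < l)%N -> p`_m = 0.
Proof. by move=> hdvd hm; rewrite -(divpK hdvd) coefMXn hm. Qed.

Lemma polyXn_neq0 k : 'X^k != 0 :> {poly CC}.
Proof. exact/monic_neq0/monicXn. Qed.

Lemma scalerXn_eq0 (al : CC) m : al *: 'X^m = 0 -> al = 0.
Proof. by move/eqP; rewrite scale_poly_eq0 (negPf (polyXn_neq0 _)) orbF => /eqP. Qed.

Lemma RelE (u : Rel) : u = (u.1, u.2).
Proof. by case: u. Qed.

Lemma addRelE (u v : Rel) : u + v = (u.1 + v.1, u.2 + v.2).
Proof. by []. Qed.

Lemma zeroRelE : (0 : Rel) = (0, 0).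
Proof. by []. Qed.

Ltac rel_ring :=
  rewrite /sc ?addRelE ?zeroRelE /=; rewrite -?mul_polyC; congr pair; ring.

Lemma scD (al : CC) u v : sc al (u + v) = sc al u + sc al v.
Proof. rel_ring. Qed.

Lemma sc0 (al : CC) : sc al 0 = 0.
Proof. by rewrite /sc !scaler0. Qed.

Lemma mod_mem0 c d : mod_mem c d 0.
Proof. by case: c => [c|] //=; rewrite dvdp0. Qed.

Lemma mod_memD c d u v : mod_mem c d u -> mod_mem c d v -> mod_mem c d (u + v).
Proof.
case: c => [c|] /=; first exact: dvdp_add.
by move=> /eqP hu /eqP hv; rewrite hu hv addr0.
Qed.

Lemma mod_mem_act c d r v : mod_mem c d v -> mod_mem c d (mod_act c r v).
Proof. by case: c => [c|] //= h; rewrite dvdp_mull. Qed.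

Lemma mod_act0l c m : mod_act c 0 m = 0.
Proof. case: c => [c|] /=; rewrite /Rmul; rel_ring. Qed.

Lemma mod_act0r c r : mod_act c r 0 = 0.
Proof. case: c => [c|] /=; rewrite /Rmul; rel_ring. Qed.

Lemma mod_actDr c r : {morph mod_act c r : u v / u + v}.
Proof. move=> u v; case: c => [c|] /=; rewrite /Rmul; rel_ring. Qed.

Lemma mod_act_sc c r (al : CC) m : mod_act c r (sc al m) = sc al (mod_act c r m).
Proof. case: c => [c|] /=; rewrite /Rmul; rel_ring. Qed.

Lemma mod_act1 c d m : mod_mem c d m -> mod_act c (1, 0) m = m.
Proof.
case: m => m1 m2; case: c => [c|] /= hm; first by rewrite /Rmul; rel_ring.
by move/eqP: hm => ->; rel_ring.
Qed.

Lemma mod_homogD c d n u v :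
  mod_homog c d n u -> mod_homog c d n v -> mod_homog c d n (u + v).
Proof.
rewrite addRelE; case: c => [c|] /=.
  by rewrite /Rhomog /= => /andP[? ?] /andP[? ?]; rewrite !pcompD.
by move=> /andP[? /eqP ->] /andP[? /eqP ->]; rewrite pcompD // addr0 eqxx.
Qed.

Lemma mod_homog_act c d n e s m : pcomp s e -> mod_homog c d n m ->
  mod_homog c d (n - e) (mod_act c (s, 0) m).
Proof.
case: c => [c|] /= hs.
  rewrite /Rhomog /Rmul /= mul0r addr0 => /andP[h1 h2].
  by apply/andP; split; [apply: pcompM hs h1 _ | apply: pcompM hs h2 _]; lia.
move=> /andP[h1 _]; rewrite eqxx andbT.
by apply: pcompM hs h1 _; lia.
Qed.

Lemma mod_homog0 c d n : mod_homog c d n 0.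
Proof. by case: c => [c|]; rewrite /= ?/Rhomog !pcomp0 ?eqxx. Qed.

Definition arc_exp (a : option int) (b : int) : nat :=
  if a is Some a' then absz (b - a' - 1)%R else 0%N.

Definition genY (a : option int) (b : int) : Rel := ('X^(arc_exp a b), 0).

Definition genX (a : option int) : Rel := if a is Some _ then (0, 1) else 0.

Definition genY_deg (a : option int) (b : int) : int := if a is Some a' then a' else b.

Lemma mod_mem_genY a b : mod_mem a b (genY a b).
Proof. by case: a => [a|] //=; rewrite dvdpp. Qed.

Lemma mod_mem_genX a b : mod_mem a b (genX a).
Proof. by case: a => [a|] //=; rewrite dvdp0. Qed.

Lemma mod_homog_genY a b : arc_ok a b -> mod_homog a b (genY_deg a b) (genY a b).
Proof.
case: a => [a|] /= hab; last by rewrite eqxx andbT; apply: pcompXn; lia.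
by rewrite /Rhomog pcomp0 andbT; apply: pcompXn; rewrite /=; lia.
Qed.

Lemma mod_homog_genX a b : mod_homog a b b (genX a).
Proof.
case: a => [a|] /=; last by rewrite pcomp0 eqxx.
by rewrite /Rhomog pcomp0 -(expr0 'X); apply: pcompXn; lia.
Qed.

Lemma genY_relation a b :
  mod_act a (0, 1) (genY a b) = mod_act a ('X^(arc_exp a b), 0) (genX a).
Proof. case: a => [a|] /=; rewrite /Rmul; rel_ring. Qed.

Lemma genX_relation a : mod_act a (0, 1) (genX a) = 0.
Proof. case: a => [a|] /=; rewrite /Rmul; rel_ring. Qed.

Lemma mod_mem_decomp a b v : mod_mem a b v ->
  v = mod_act a (v.1 %/ 'X^(arc_exp a b), 0) (genY a b) + mod_act a (v.2, 0) (genX a).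
Proof.
case: a => [a|] /= hv.
  by rewrite /Rmul /= {1}(RelE v) -{1}(divpK hv); rel_ring.
by move/eqP: hv => hv; rewrite expr0 divp1 {1}(RelE v) hv; rel_ring.
Qed.

(* Candidate images of [genY a b] and [genX a]; for an infinite arc [genX a = 0]. *)
Record gen_images_ok a b c d (m1 m2 : Rel) : Prop := GenImagesOk {
  gen_images_mem1 : mod_mem c d m1;
  gen_images_mem2 : mod_mem c d m2;
  gen_images_homog1 : mod_homog c d (genY_deg a b) m1;
  gen_images_homog2 : mod_homog c d b m2;
  gen_images_relY : mod_act c (0, 1) m1 = mod_act c ('X^(arc_exp a b), 0) m2;
  gen_images_relX : mod_act c (0, 1) m2 = 0;
  gen_images_inf : a = None -> m2 = 0 }.

Definition hom_of_gens a b c (m1 m2 : Rel) (v : Rel) : Rel :=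
  mod_act c (v.1 %/ 'X^(arc_exp a b), 0) m1 + mod_act c (v.2, 0) m2.

Lemma gen_images_fin_target a b c d s1 t1 s2 t2 :
  gen_images_ok a b (Some c) d (s1, t1) (s2, t2) ->
  s1 = 'X^(arc_exp a b) * t2 /\ s2 = 0.
Proof.
case=> _ _ _ _ + + _; rewrite /= /Rmul /= => -[_ relY] [_ relX].
by move: relY relX; rewrite !mul0r !add0r !mul1r addr0 => -> ->.
Qed.

Lemma gen_images_inf_target a b d s1 t1 m2 :
  gen_images_ok a b None d (s1, t1) m2 -> t1 = 0 /\ m2 = 0.
Proof.
case: m2 => s2 t2 [/= /eqP t1_0 /eqP t2_0 _ _ relY _ _]; split=> //.
move: relY => [] /esym/eqP; rewrite mul0r mulf_eq0 (negPf (polyXn_neq0 _)) /=.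
by move=> /eqP ->; rewrite t2_0.
Qed.

Section HomOfGenImages.

Variables (a : option int) (b : int) (c : option int) (d : int).

Lemma is_hom0 g : is_hom a b c d g -> g 0 = 0.
Proof.
case=> _ g_add _ _; apply: (@addrI _ (g 0)).
by rewrite -g_add ?mod_mem0 // !addr0.
Qed.

Lemma is_hom_gen_images g : arc_ok a b -> is_hom a b c d g ->
  gen_images_ok a b c d (g (genY a b)) (g (genX a)).
Proof.
move=> hab g_hom; have g0 := is_hom0 g_hom.
case: g_hom => g_mem _ g_act g_homog.
have hY := mod_mem_genY a b; have hX := mod_mem_genX a b.
split; [exact: g_mem | exact: g_mem | exact/g_homog/mod_homog_genY |
        exact/g_homog/mod_homog_genX | | | by move=> a_inf; rewrite a_inf /= g0].
- by rewrite -!g_act // genY_relation.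
- by rewrite -g_act // genX_relation g0.
Qed.

Lemma is_hom_decomp g v : is_hom a b c d g -> mod_mem a b v ->
  g v = hom_of_gens a b c (g (genY a b)) (g (genX a)) v.
Proof.
case=> _ g_add g_act _ hv.
by rewrite {1}(mod_mem_decomp hv) g_add ?g_act ?mod_mem_act ?mod_mem_genY ?mod_mem_genX.
Qed.

Lemma hom_of_gensD m1 m2 u v :
  hom_of_gens a b c m1 m2 (u + v) = hom_of_gens a b c m1 m2 u + hom_of_gens a b c m1 m2 v.
Proof. by rewrite /hom_of_gens addRelE divpD; case: c => [c'|] /=; rewrite /Rmul; rel_ring. Qed.

Lemma hom_of_gens_sum k (cs : 'I_k -> CC) (n1 n2 : 'I_k -> Rel) v :
  hom_of_gens a b c (\sum_i sc (cs i) (n1 i)) (\sum_i sc (cs i) (n2 i)) v =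
  \sum_i sc (cs i) (hom_of_gens a b c (n1 i) (n2 i) v).
Proof.
rewrite /hom_of_gens !(big_morph _ (mod_actDr c _) (mod_act0r c _)) -big_split /=.
by apply: eq_bigr => i _; rewrite !mod_act_sc scD.
Qed.

Section GenImages.

Variables m1 m2 : Rel.
Hypothesis ok : gen_images_ok a b c d m1 m2.

Lemma hom_of_gens_genY : hom_of_gens a b c m1 m2 (genY a b) = m1.
Proof.
rewrite /hom_of_gens /= divpp ?polyXn_neq0 // (mod_act1 (gen_images_mem1 ok)).
by rewrite -zeroRelE mod_act0l addr0.
Qed.

Lemma hom_of_gens_genX : hom_of_gens a b c m1 m2 (genX a) = m2.
Proof.
rewrite /hom_of_gens; have -> : (genX a).1 = 0 by case: (a).
rewrite div0p -zeroRelE mod_act0l add0r.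
case: a ok => [a'|] ok' /=; first exact: mod_act1 (gen_images_mem2 ok').
by rewrite (gen_images_inf ok') // mod_act0r.
Qed.

Lemma hom_of_gens_mem v : mod_mem c d (hom_of_gens a b c m1 m2 v).
Proof.
by apply: mod_memD; apply: mod_mem_act; [exact: gen_images_mem1 ok | exact: gen_images_mem2 ok].
Qed.

Lemma hom_of_gens_homog n v : arc_ok a b -> mod_mem a b v -> mod_homog a b n v ->
  mod_homog c d n (hom_of_gens a b c m1 m2 v).
Proof.
move=> hab hv hvn.
have h1 : pcomp (v.1 %/ 'X^(arc_exp a b)) (genY_deg a b - n).
  case: a hab hv hvn => [a'|] /= hab hv; last first.
    by rewrite expr0 divp1 => /andP[h1 _]; apply: pcomp_eq_exp h1 _; lia.
  by rewrite /Rhomog => /andP[h1 _]; apply: pcomp_eq_exp (pcomp_divXn h1 hv) _; lia.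
have h2 : pcomp v.2 (b - n).
  case: a hv hvn => [a'|] /= hv; last by move=> /andP[_ /eqP ->]; rewrite pcomp0.
  by rewrite /Rhomog => /andP[_ h2]; apply: pcomp_eq_exp h2 _; lia.
apply: mod_homogD.
  by have := mod_homog_act h1 (gen_images_homog1 ok); rewrite subKr.
by have := mod_homog_act h2 (gen_images_homog2 ok); rewrite subKr.
Qed.

Lemma hom_of_gens_act r v : mod_mem a b v ->
  hom_of_gens a b c m1 m2 (mod_act a r v) = mod_act c r (hom_of_gens a b c m1 m2 v).
Proof.
move: ok; case: m1 m2 v => [s1 t1] [s2 t2] [v1 v2] ok'.
rewrite /hom_of_gens; case: a ok' => [a'|] /= ok' hv.
  set k := absz (b - a' - 1)%R.
  have [p ->] : exists p, v1 = p * 'X^k by exists (v1 %/ 'X^k); rewrite divpK.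
  rewrite /Rmul /= !mulrA !mulpK ?polyXn_neq0 //.
  case: c ok' => [c'|] ok' /=.
    by have [-> ->] := gen_images_fin_target ok'; rewrite /Rmul; rel_ring.
  by have [_] := gen_images_inf_target ok'; rewrite zeroRelE => -[-> _]; rel_ring.
have m2_0 := gen_images_inf ok' erefl.
move: m2_0 ok' hv; rewrite zeroRelE => -[-> ->] ok' /eqP ->.
rewrite expr0 !divp1; case: c ok' => [c'|] ok' /=.
  by have [-> _] := gen_images_fin_target ok'; rewrite /Rmul; rel_ring.
by rel_ring.
Qed.

Lemma hom_of_gens_is_hom : arc_ok a b -> is_hom a b c d (hom_of_gens a b c m1 m2).
Proof.
move=> hab; split=> [v _ | u v _ _ | r v hv | n v hv hvn].
- exact: hom_of_gens_mem.
- exact: hom_of_gensD.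
- exact: hom_of_gens_act.
- exact: hom_of_gens_homog.
Qed.

End GenImages.

End HomOfGenImages.

Lemma hom_iso_Ck_of_gen_images_basis a b c d k (n1 n2 : 'I_k -> Rel) :
  arc_ok a b ->
  (forall i, gen_images_ok a b c d (n1 i) (n2 i)) ->
  (forall cs : 'I_k -> CC, \sum_i sc (cs i) (n1 i) = 0 -> \sum_i sc (cs i) (n2 i) = 0 ->
     forall i, cs i = 0) ->
  (forall m1 m2, gen_images_ok a b c d m1 m2 -> exists cs : 'I_k -> CC,
     m1 = \sum_i sc (cs i) (n1 i) /\ m2 = \sum_i sc (cs i) (n2 i)) ->
  hom_iso_Ck a b c d k.
Proof.
move=> hab n_ok n_free n_span.
exists (fun i => hom_of_gens a b c (n1 i) (n2 i)); split.
- by move=> i; apply: hom_of_gens_is_hom (n_ok i) hab.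
- move=> cs hcs; apply: n_free.
    have := hcs _ (mod_mem_genY a b).
    by under eq_bigr => i _ do rewrite (hom_of_gens_genY (n_ok i)).
  have := hcs _ (mod_mem_genX a b).
  by under eq_bigr => i _ do rewrite (hom_of_gens_genX (n_ok i)).
- move=> g g_hom; have [cs [e1 e2]] := n_span _ _ (is_hom_gen_images hab g_hom).
  by exists cs => v hv; rewrite (is_hom_decomp g_hom hv) e1 e2 hom_of_gens_sum.
Qed.

Lemma hom_iso_monomial a b c d (e : int) (emb : {poly CC} -> Rel) :
  arc_ok a b ->
  (forall (al : CC) p, emb (al *: p) = sc al (emb p)) ->
  (forall p, emb p = 0 -> p = 0) ->
  (forall m1 m2, gen_images_ok a b c d m1 m2 <->
     exists2 p, pcomp p e & m1 = emb p /\ m2 = 0) ->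
  hom_iso_Ck a b c d (if e < 0 then 0 else 1).
Proof.
move=> hab emb_sc emb_inj sols; case: ltP => he.
  apply: (@hom_iso_Ck_of_gen_images_basis _ _ _ _ 0 (fun=> 0) (fun=> 0)) => //.
  - by case.
  - by move=> ? ? ? [].
  move=> m1 m2 /sols[p hp [-> ->]]; exists (fun=> 0).
  by rewrite !big_ord0 (pcomp_lt0 hp he) -(scale0r 0) emb_sc /sc !scale0r.
apply: (@hom_iso_Ck_of_gen_images_basis _ _ _ _ 1 (fun=> emb 'X^(absz e)) (fun=> 0)) => //.
- by move=> _; apply/sols; exists 'X^(absz e) => //; apply: pcompXn; lia.
- by move=> cs; rewrite !big_ord1 -emb_sc => /emb_inj/scalerXn_eq0 cs0 _ i; rewrite ord1.
move=> m1 m2 /sols[p hp [-> ->]]; have [al ->] := pcomp_monomial hp he.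
by exists (fun=> al); rewrite !big_ord1 emb_sc sc0.
Qed.

Lemma gen_images_to_infP a b d m1 m2 :
  gen_images_ok a b None d m1 m2 <->
  exists2 p, pcomp p (d - genY_deg a b) & m1 = (p, 0) /\ m2 = 0.
Proof.
split.
  case: m1 => s1 t1 ok; have [-> ->] := gen_images_inf_target ok.
  exists s1 => //; move: (gen_images_homog1 ok) => /= /andP[hs1 _].
  by apply: pcomp_eq_exp hs1 _; lia.
move=> [p hp [-> ->]]; split.
- exact: eqxx.
- exact: mod_mem0.
- by rewrite /= eqxx andbT; apply: pcomp_eq_exp hp _; lia.
- exact: mod_homog0.
- by rewrite mod_act0r /=; rel_ring.
- exact: mod_act0r.
- by [].
Qed.

Lemma gen_images_fin_finP (a b c d : int) s1 t1 s2 t2 : a < b ->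
  gen_images_ok (Some a) b (Some c) d (s1, t1) (s2, t2) <->
  [/\ s1 = 'X^(absz (b - a - 1)%R) * t2, s2 = 0, pcomp t1 (d - a),
      pcomp t2 (d - b) & 'X^(absz (d - c - 1)%R) %| s1].
Proof.
move=> hab; split.
  move=> ok; have [s1E s2E] := gen_images_fin_target ok.
  case: ok => hs1 _ /= /andP[_ ht1] /andP[_ ht2] _ _ _.
  by split=> //; [apply: pcomp_eq_exp ht1 _ | apply: pcomp_eq_exp ht2 _]; lia.
move=> [-> -> ht1 ht2 hdvd]; split.
- exact: hdvd.
- exact: dvdp0.
- apply/andP; split=> /=; last by apply: pcomp_eq_exp ht1 _; lia.
  by apply: pcompM (pcompXn erefl) ht2 _; lia.
- by apply/andP; split; [exact: pcomp0 | apply: pcomp_eq_exp ht2 _; lia].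
- by rewrite /= /Rmul; rel_ring.
- by rewrite /= /Rmul; rel_ring.
- by [].
Qed.

Arguments gen_images_fin_finP {a b c d s1 t1 s2 t2}.

Lemma gen_images_inf_finP b c d m1 m2 :
  gen_images_ok None b (Some c) d m1 m2 <->
  exists2 q, pcomp q (d - b) & m1 = (0, q) /\ m2 = 0.
Proof.
split.
  case: m1 m2 => s1 t1 [s2 t2] ok; have [s1E s2E] := gen_images_fin_target ok.
  move: (gen_images_inf ok erefl); rewrite zeroRelE => -[_ t2_0].
  exists t1; last by rewrite s1E s2E t2_0 mulr0.
  by move: (gen_images_homog1 ok) => /= /andP[_ ht1]; apply: pcomp_eq_exp ht1 _; lia.
move=> [q hq [-> ->]]; split.
- exact: dvdp0.
- exact: mod_mem0.
- by apply/andP; split=> /=; [exact: pcomp0 | apply: pcomp_eq_exp hq _; lia].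
- exact: mod_homog0.
- by rewrite mod_act0r /= /Rmul; rel_ring.
- exact: mod_act0r.
- by [].
Qed.

Lemma not_nested_image_eq0 (a b c d : int) t : a < b -> ~~ ((a <= c) && (b <= d)) ->
  pcomp t (d - b) -> 'X^(absz (d - c - 1)%R) %| 'X^(absz (b - a - 1)%R) * t -> t = 0.
Proof.
move=> hab not_nested ht hdvd; case: (leP b d) => hbd; last by apply: pcomp_lt0 ht _; lia.
(* Here [y^(d-c-1)] would divide [y^k t], whose only monomial is [y^(d-a-1)], with [c < a]. *)
have hca : c < a by move: not_nested; rewrite hbd andbT -ltNge.
have [al t_al] := pcomp_monomial ht (ltac:(lia) : 0 <= d - b).
suff al0 : al = 0 by rewrite t_al al0 scale0r.
have := coef_dvdXn (m := (absz (d - b)%R + absz (b - a - 1)%R)%N) hdvd.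
rewrite mulrC coefMXn (ltnNge _ (absz (b - a - 1)%R)) leq_addl addnK t_al coefZ coefXn eqxx mulr1.
by apply; lia.
Qed.

Lemma gen_images_not_nestedP (a : option int) (b c d : int) m1 m2 : arc_ok a b ->
  ~~ ((a != None) && le_ext a (Some c) && (b <= d)) ->
  gen_images_ok a b (Some c) d m1 m2 <->
  exists2 q, pcomp q (d - genY_deg a b) & m1 = (0, q) /\ m2 = 0.
Proof.
case: a => [a|] /= hab not_nested; last exact: gen_images_inf_finP.
split.
  case: m1 m2 => s1 t1 [s2 t2] /(gen_images_fin_finP hab) [s1E -> ht1 ht2 hdvd].
  have t2_0 : t2 = 0 by apply: not_nested_image_eq0 hab not_nested ht2 _; rewrite -s1E.
  by exists t1 => //; rewrite s1E t2_0 mulr0.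
move=> [q hq [-> ->]]; rewrite zeroRelE; apply/(gen_images_fin_finP hab).
by split; rewrite ?mulr0 ?pcomp0 ?dvdp0.
Qed.

Lemma hom_iso_nested (a b c d : int) : a < b -> c < d -> a <= c -> b <= d ->
  hom_iso_Ck (Some a) b (Some c) d 2.
Proof.
move=> hab hcd hac hbd.
pose k := absz (b - a - 1)%R; pose l := absz (d - b)%R; pose m := absz (d - a)%R.
pose n1 (i : 'I_2) : Rel := if i == ord0 then ('X^k * 'X^l, 0) else (0, 'X^m).
pose n2 (i : 'I_2) : Rel := if i == ord0 then (0, 'X^l) else 0.
apply: (hom_iso_Ck_of_gen_images_basis (n1 := n1) (n2 := n2)) => //.
- move=> i; rewrite /n1 /n2 zeroRelE; case: (i == ord0); apply/(gen_images_fin_finP hab).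
    split=> //; first exact: pcomp0.
      by apply: pcompXn; lia.
    by rewrite -exprD dvdp_exp2l //; lia.
  by split; rewrite ?mulr0 ?pcomp0 ?dvdp0 //; apply: pcompXn; lia.
- move=> cs; rewrite !big_ord_recl !big_ord0 /= /n1 /n2 /sc !addRelE /=.
  rewrite !scaler0 !addr0 !add0r -exprD => -[/scalerXn_eq0 cs0 /scalerXn_eq0 cs1] _.
  by case=> -[|[|//]] hi; [rewrite -cs0 | rewrite -cs1]; congr cs; apply: val_inj.
move=> [s1 t1] [s2 t2] /(gen_images_fin_finP hab) [-> -> ht1 ht2 _].
have [al ->] := pcomp_monomial ht2 (ltac:(lia) : 0 <= d - b).
have [be ->] := pcomp_monomial ht1 (ltac:(lia) : 0 <= d - a).
exists (fun i => if i == ord0 then al else be).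
by rewrite !big_ord_recl !big_ord0 /= /n1 /n2 /=; split; rel_ring.
Qed.

Lemma hom_iso_not_nested (a : option int) (b c d : int) : arc_ok a b ->
  ~~ ((a != None) && le_ext a (Some c) && (b <= d)) ->
  hom_iso_Ck a b (Some c) d (if d < genY_deg a b then 0 else 1).
Proof.
move=> hab not_nested; rewrite -subr_lt0.
apply: (hom_iso_monomial (emb := fun q => (0, q)) hab).
- by move=> al q; rewrite /sc scaler0.
- by move=> q; rewrite zeroRelE => -[].
- by move=> m1 m2; apply: gen_images_not_nestedP.
Qed.

Lemma hom_iso_to_inf a b d : arc_ok a b ->
  hom_iso_Ck a b None d (if d < genY_deg a b then 0 else 1).
Proof.
move=> hab; rewrite -subr_lt0.
apply: (hom_iso_monomial (emb := fun p => (p, 0)) hab).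
- by move=> al p; rewrite /sc scaler0.
- by move=> p; rewrite zeroRelE => -[].
- by move=> m1 m2; apply: gen_images_to_infP.
Qed.

Theorem proposition4p3 (a : option int) (b : int) (c : option int) (d : int) :
  arc_ok a b -> arc_ok c d ->
  hom_iso_Ck a b c d
    (if (a != None) && le_ext a c && (b <= d) then 2%N
     else if (a == None) && (d < b) then 0%N
     else if (if a is Some a' then d < a' else false) then 0%N
     else 1%N).
Proof.
move=> hab; case: c => [c hcd|_]; last first.
  by case: a hab => [a|] hab; apply: hom_iso_to_inf.
case: a hab => [a|] hab /=; last exact: hom_iso_not_nested.
case: ifP => [/andP[hac hbd] | not_nested]; first exact: hom_iso_nested.
by apply: hom_iso_not_nested; rewrite //= not_nested.
Qed.
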